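(* Let $X$ be a space with $e(X)>\omega$ and $Y$ a $T_1$ space with $c(Y)>\omega$. Then $X\times Y$ is not set star Lindelöf.
   Context: $e(X)$ is the supremum of cardinalities of closed discrete subsets of $X$; $c(Y)$ is the supremum of cardinalities of families of pairwise disjoint nonempty open subsets of $Y$. For a family $\mathcal U$ of subsets of $Z$ and $A\subseteq Z$, $st(A,\mathcal U)=\bigcup\{U\in\mathcal U: U\cap A\neq\emptyset\}$. A space $Z$ is set star Lindelöf if for every nonempty $A\subseteq Z$ and every family $\mathcal U$ of open subsets with $\overline A\subseteq\bigcup\mathcal U$ there is a countable $\mathcal V\subseteq\mathcal U$ with $A\subseteq st(\bigcup\mathcal V,\mathcal U)$. *)

From HB Require Import structures.
From mathcomp Require Import all_boot all_order.
From mathcomp Require Import all_classical all_reals all_analysis.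
Set Implicit Arguments. Unset Strict Implicit. Unset Printing Implicit Defensive.
Local Open Scope classical_set_scope.

Definition closed_discrete {X : topologicalType} (D : set X) : Prop :=
  closed D /\ forall x, D x -> exists U : set X, open U /\ U x /\ U `&` D = [set x].

Definition extent_gt_omega (X : topologicalType) : Prop :=
  exists D : set X, closed_discrete D /\ ~ countable D.

Definition cellularity_gt_omega (Y : topologicalType) : Prop :=
  exists F : set (set Y),
    (forall U, F U -> open U /\ U !=set0) /\
    (forall U V, F U -> F V -> U <> V -> U `&` V = set0) /\
    ~ countable F.

Definition star {Z : Type} (A : set Z) (U : set (set Z)) : set Z :=
  \bigcup_(W in [set W | U W /\ W `&` A !=set0]) W.

Definition set_star_lindelof (Z : topologicalType) : Prop :=
  forall (A : set Z) (U : set (set Z)),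
    A !=set0 ->
    (forall W, U W -> open W) ->
    closure A `<=` \bigcup_(W in U) W ->
    exists V : set (set Z),
      V `<=` U /\ countable V /\ A `<=` star (\bigcup_(W in V) W) U.

From mathcomp Require Import all_boot all_order.
From mathcomp Require Import all_classical all_reals all_analysis.
Set Implicit Arguments. Unset Strict Implicit. Unset Printing Implicit Defensive.
Local Open Scope classical_set_scope.

(* Match uncountably many points x of a closed discrete subset of X
   injectively with members g x of an uncountable cellular family of Y, and
   pick y x in g x.  As Y is T1, the set A of the points (x, y x) is closed,
   hence covered by the open boxes O x * g x, with O x an open set isolating x.
   The point (x, y x) lies only in the box of x, and distinct boxes are
   disjoint, so a subfamily whose star contains A contains every box; there are
   uncountably many boxes. *)

Lemma nonempty_uncountable (T : Type) (A : set T) : ~ countable A -> A !=set0.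
Proof. by move=> Aunc; apply/set0P/eqP => A0; apply: Aunc; rewrite A0. Qed.

Section matching.
Variables (T U : Type) (A : set T) (B : set U).

Definition matching (M : set (T * U)) :=
  M `<=` A `*` B /\ forall p q, M p -> M q -> (p.1 = q.1 <-> p.2 = q.2).

Lemma chain_matching (G : set (set (T * U))) :
  G `<=` matching -> total_on G subset -> matching (\bigcup_(M in G) M).
Proof.
move=> Gm Gtot; split=> [p [M GM Mp]|p q [M GM Mp] [N GN Nq]].
  exact: (Gm _ GM).1.
have [MN|NM] := Gtot _ _ GM GN.
- by apply: (Gm _ GN).2 => //; exact: MN.
- by apply: (Gm _ GM).2 => //; exact: NM.
Qed.

Lemma maximal_matching_uncountable (M : set (T * U)) :
  matching M -> (forall N, M `<` N -> ~ matching N) ->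
  ~ countable A -> ~ countable B -> ~ countable M.
Proof.
move=> [MAB Minj] Mmax Aunc Bunc Mcount.
have fstM : countable (fst @` M) := sub_countable (card_image_le _ _) Mcount.
have sndM : countable (snd @` M) := sub_countable (card_image_le _ _) Mcount.
have [x [Ax Mx]] : exists x, A x /\ ~ (fst @` M) x.
  apply: contrapT => /forallNP AM; apply/Aunc/(sub_countable _ fstM).
  by apply: subset_card_le => x Ax; apply: contrapT => Mx; exact: (AM x).
have [u [Bu Mu]] : exists u, B u /\ ~ (snd @` M) u.
  apply: contrapT => /forallNP BM; apply/Bunc/(sub_countable _ sndM).
  by apply: subset_card_le => u Bu; apply: contrapT => Mu; exact: (BM u).
apply: (Mmax (M `|` [set (x, u)])).
  split=> [p Mp|/(_ (x, u) (or_intror erefl)) Mxu]; first by left.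
  by apply: Mx; exists (x, u).
split=> [p [/MAB //|->] //|p q [Mp|->] [Mq|->] //].
- exact: Minj.
- by split=> /= pq; [case: Mx; exists p|case: Mu; exists p].
- by split=> /= pq; [case: Mx; exists q|case: Mu; exists q].
Qed.

Lemma uncountable_matching : ~ countable A -> ~ countable B ->
  exists (E : set T) (f : T -> U),
    [/\ E `<=` A, ~ countable E, {in E &, injective f} & f @` E `<=` B].
Proof.
move=> Aunc Bunc.
have [M [Mm Mmax]] := Zorn_bigcup chain_matching.
have Munc := maximal_matching_uncountable Mm Mmax Aunc Bunc.
have [[x0 u0] _] := nonempty_uncountable Munc.
have /choice[f Mf] : forall x, exists u, (fst @` M) x -> M (x, u).
  by move=> x; case: (pselect ((fst @` M) x)) => [[[? u] Mu <-]|]; [exists u|exists u0].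
have fst_inj : {in M &, injective fst}.
  move=> [x u] [x' u'] /set_mem Mp /set_mem Mq /= xx'.
  by have /= uu' := (Mm.2 _ _ Mp Mq).1 xx'; rewrite xx' uu'.
exists (fst @` M), f; split.
- by move=> _ [p /Mm.1 [] ? _ <-].
- by rewrite (eq_countable (inj_card_eq fst_inj)).
- move=> x x' /set_mem Ex /set_mem Ex' fxx'.
  exact: ((Mm.2 _ _ (Mf _ Ex) (Mf _ Ex')).2 fxx').
- by move=> _ [x Ex <-]; have [] := Mm.1 _ (Mf _ Ex).
Qed.

End matching.

Lemma nbhs_setX (X Y : topologicalType) (P : set X) (Q : set Y) x y :
  open P -> open Q -> P x -> Q y -> nbhs (x, y) (P `*` Q).
Proof. by move=> oP oQ Px Qy; exists (P, Q) => //; split; apply: open_nbhs_nbhs. Qed.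

Lemma open_setX (X Y : topologicalType) (P : set X) (Q : set Y) :
  open P -> open Q -> open (P `*` Q).
Proof. by move=> oP oQ; rewrite openE => -[x y] [Px Qy]; exact: nbhs_setX. Qed.

Lemma closed_discrete_sub (X : topologicalType) (D E : set X) :
  closed_discrete D -> E `<=` D -> closed_discrete E.
Proof.
move=> [Dclosed Ddisc] ED; split=> [x Ex|x Ex].
- have [U [oU [Ux UD]]] := Ddisc _ (Dclosed _ (closureS ED Ex)).
  have [e [Ee Ue]] := Ex _ (open_nbhs_nbhs (conj oU Ux)).
  have : (U `&` D) e by split => //; exact: ED.
  by rewrite UD => <-.
- have [U [oU [Ux UD]]] := Ddisc _ (ED _ Ex).
  exists U; split=> //; split=> //; apply/seteqP; split=> [z [Uz Ez]|z ->] //.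
  by rewrite -UD; split => //; exact: ED.
Qed.

Lemma closed_discrete_separating (X : topologicalType) (D : set X) :
  closed_discrete D -> exists iso : X -> set X,
    (forall x, D x -> open_nbhs x (iso x)) /\
    (forall x x', D x -> D x' -> iso x x' -> x = x').
Proof.
move=> [_ Ddisc].
have /choice[iso iso_spec] : forall x, exists U : set X,
    D x -> [/\ open U, U x & U `&` D = [set x]].
  move=> x; case: (pselect (D x)) => [/Ddisc [U [? []]]|]; last by exists setT.
  by exists U.
exists iso; split=> [x /iso_spec [] //|x x' Dx Dx' isox'].
have [_ _ isoD] := iso_spec _ Dx.
have : (iso x `&` D) x' by [].
by rewrite isoD => ->.
Qed.

Section selection_cover.
Variables (X Y : topologicalType) (E : set X) (iso : X -> set X) (g : X -> set Y).
Variable y : X -> Y.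
Hypothesis E_closed : closed E.
Hypothesis iso_nbhs : forall x, E x -> open_nbhs x (iso x).
Hypothesis iso_sep : forall x x', E x -> E x' -> iso x x' -> x = x'.
Hypothesis g_open : forall x, E x -> open (g x).
Hypothesis g_y : forall x, E x -> g x (y x).
Hypothesis g_disj : forall x x', E x -> E x' -> g x `&` g x' !=set0 -> x = x'.
Hypothesis Y_T1 : accessible_space Y.

Let A := [set (x, y x) | x in E].
Let C := [set iso x `*` g x | x in E].

Lemma closed_selection_graph : closed A.
Proof.
move=> [x u] Axu.
have meetA P Q : open P -> open Q -> P x -> Q u ->
    exists2 x', E x' & P x' /\ Q (y x').
  move=> oP oQ Px Qu.
  by have [_ [[x' Ex' <-] [/= Px' Qx']]] := Axu _ (nbhs_setX oP oQ Px Qu); exists x'.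
have Ex : E x.
  apply: contrapT => nEx.
  have [x' Ex' [nEx' _]] := meetA _ _ (closed_openC E_closed) openT nEx I.
  exact: nEx' Ex'.
have [oO isox] := iso_nbhs Ex.
suff -> : u = y x by exists x.
apply: contrapT => /eqP uyx.
have [W [oW /set_mem Wu /set_mem nWyx]] := Y_T1 uyx.
have [x' Ex' [isox' Wyx']] := meetA _ _ oO oW isox Wu.
by rewrite -(iso_sep Ex Ex' isox') in Wyx'.
Qed.

Lemma star_selection_graph_sub (V : set (set (X * Y))) :
  V `<=` C -> A `<=` star (\bigcup_(W in V) W) C -> C `<=` V.
Proof.
move=> VC Astar _ [x Ex <-].
have [_ [[x' Ex' <-] [w [[_ gw] [W VW Ww]]]] [/= isox' _]] := Astar _ (imageP _ Ex).
have x'x := iso_sep Ex' Ex isox'; subst x'.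
have [x'' Ex'' W_eq] := VC _ VW; subst W.
by rewrite (g_disj Ex Ex'' (ex_intro _ w.2 (conj gw Ww.2))).
Qed.

Lemma countable_selection_cover : countable C -> countable E.
Proof.
suff Cinj : {in E &, injective (fun x => iso x `*` g x)}.
  by rewrite /C (eq_countable (inj_card_eq Cinj)).
move=> x x' /set_mem Ex /set_mem Ex' Oxx'.
have : (iso x' `*` g x') (x, y x) by rewrite -Oxx'; split; [exact: (iso_nbhs Ex).2|exact: g_y].
by move=> [/= /(iso_sep Ex' Ex) ->].
Qed.

Lemma not_set_star_lindelof_setX : ~ countable E -> ~ set_star_lindelof (X * Y)%type.
Proof.
move=> Eunc ssl.
have [x0 Ex0] := nonempty_uncountable Eunc.
have [| |p /closed_selection_graph [x Ex <-]|V [VC [Vcount Astar]]] := ssl A C.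
- by exists (x0, y x0), x0.
- by move=> _ [x Ex <-]; apply: open_setX; [exact: (iso_nbhs Ex).1|exact: g_open].
- exists (iso x `*` g x); first by exists x.
  by split; [exact: (iso_nbhs Ex).2|exact: g_y].
- apply/Eunc/countable_selection_cover.
  exact: sub_countable (subset_card_le (star_selection_graph_sub VC Astar)) Vcount.
Qed.

End selection_cover.

Theorem proposition3p4 (X Y : topologicalType) :
  extent_gt_omega X -> @accessible_space Y -> cellularity_gt_omega Y ->
  ~ set_star_lindelof (X * Y)%type.
Proof.
move=> [D [Dcd Dunc]] Y_T1 [F [F_cell [F_disj Func]]].
have [E [f [ED Eunc f_inj fEF]]] := uncountable_matching Dunc Func.
have Ecd := closed_discrete_sub Dcd ED.
have [iso [iso_nbhs iso_sep]] := closed_discrete_separating Ecd.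
have f_cell x : E x -> open (f x) /\ f x !=set0 by move=> Ex; apply/F_cell/fEF; exists x.
have [x0 Ex0] := nonempty_uncountable Eunc.
have [y0 _] := (f_cell _ Ex0).2.
have /choice[y f_y] : forall x, exists u, E x -> f x u.
  move=> x; case: (pselect (E x)) => [/f_cell [_ [u fu]]|]; last by exists y0.
  by exists u.
apply: (not_set_star_lindelof_setX Ecd.1 iso_nbhs iso_sep
  (fun x Ex => (f_cell x Ex).1) f_y _ Y_T1 Eunc).
move=> x x' Ex Ex' /set0P/eqP fxx'; apply: f_inj; rewrite ?inE //.
by apply: contrapT => xx'; apply/fxx'/F_disj => //; exact/fEF/imageP.
Qed.
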